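(* Let $\lambda\in\mathbb{R}$. Let $\psi\in C^\infty\big(\mathbb{R}^n\times(\mathbb{R}^n\setminus\{0\})\big)$ be positively homogeneous of degree $\lambda$ in $\xi$ and satisfy $\psi(x+\tau\xi,\xi)=\psi(x,\xi)$ for all $\tau\in\mathbb{R}$. Let $\varphi$ be the restriction of $\psi$ to $T\mathbb{S}^{n-1}$. Then for every integer $k\ge1$ and all indices $1\le i_1,j_1,\dots,i_k,j_k\le n$, $$(J_{i_1j_1}\cdots J_{i_kj_k}\psi)|_{T\mathbb{S}^{n-1}}=E_1E_2\cdots E_k\varphi,$$ where $$E_l=\mathcal{J}_{i_lj_l}-c_l(\lambda,k)\big(\xi_{i_l}X_{j_l}-\xi_{j_l}X_{i_l}\big),\qquad c_l(\lambda,k)=\lambda-k+l+1,$$ and the composition is taken with $E_1$ leftmost.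
   Context: $T\mathbb{S}^{n-1}=\{(x,\xi):|\xi|=1,\ \langle x,\xi\rangle=0\}$. Positive homogeneity of degree $\lambda$ in $\xi$ means $\psi(x,c\xi)=c^\lambda\psi(x,\xi)$ for $c>0$. The John operators are $J_{ij}=\partial^2/\partial x^i\partial\xi^j-\partial^2/\partial x^j\partial\xi^i$. Define vector fields on $\mathbb{R}^n\times\mathbb{R}^n$ (summation over $p$) $$\tilde X_i=\partial/\partial x^i-\xi_i\xi^p\,\partial/\partial x^p,\qquad \tilde\Xi_i=\partial/\partial\xi^i-x_i\xi^p\,\partial/\partial x^p-\xi_i\xi^p\,\partial/\partial\xi^p.$$ These are tangent to $T\mathbb{S}^{n-1}$; $X_i,\Xi_i$ are their restrictions, and $\mathcal{J}_{ij}=X_i\Xi_j-X_j\Xi_i$. Here $\xi_i=\xi^i$ acts by multiplication. *)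

From HB Require Import structures.
From mathcomp Require Import all_boot all_order all_algebra.
From mathcomp Require Import all_classical all_reals all_analysis.
Set Implicit Arguments. Unset Strict Implicit. Unset Printing Implicit Defensive.
Import Order.TTheory GRing.Theory Num.Theory.
Import numFieldNormedType.Exports.
Local Open Scope ring_scope.

Section Defs.
Variables (R : realType) (n : nat).
Notation vec := 'rV[R]_n.

(* standard basis vector e_i and coordinates v_i := v 0 i *)
Definition ev (i : 'I_n) : vec := delta_mx 0 i.
Definition dot (u v : vec) : R := \sum_(k < n) u 0 k * v 0 k.
Definition enorm (u : vec) : R := Num.sqrt (dot u u).

Definition inTS (x xi : vec) : bool := (dot xi xi == 1) && (dot x xi == 0).

Definition fn := vec -> vec -> R.

Definition dx (i : 'I_n) (f : fn) : fn :=
  fun x xi => derive1 (fun t : R => f (x + t *: ev i) xi) 0.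
Definition dxi (i : 'I_n) (f : fn) : fn :=
  fun x xi => derive1 (fun t : R => f x (xi + t *: ev i)) 0.

Fixpoint iterd (s : seq (bool * 'I_n)) (f : fn) : fn :=
  match s with
  | [::] => f
  | (b, i) :: s' => (if b then dxi i else dx i) (iterd s' f)
  end.

Definition smooth_off0 (f : fn) : Prop :=
  forall s : seq (bool * 'I_n), forall x xi : vec, xi != 0 ->
    (forall i : 'I_n,
        derivable (fun t : R => iterd s f (x + t *: ev i) xi) 0 1 /\
        derivable (fun t : R => iterd s f x (xi + t *: ev i)) 0 1) /\
    {for (x, xi), continuous (fun p : vec * vec => iterd s f p.1 p.2)}.

Definition Jop (i j : 'I_n) (f : fn) : fn :=
  fun x xi => dx i (dxi j f) x xi - dx j (dxi i f) x xi.

Definition restrTS (f : fn) : fn := fun x xi => if inTS x xi then f x xi else 0.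

(* Action of the tangent vector fields X_i, Xi_i on functions on T S^{n-1}:
   X f (p) = (f o gamma)'(0) for a curve gamma lying in T S^{n-1} with
   gamma(0) = p and gamma'(0) = (tilde X)(p).  Only values of f on
   T S^{n-1} are used (when p is in T S^{n-1}). *)
(* X_i: tilde X_i = (e_i - xi_i xi, 0); the curve is the straight line. *)
Definition Xop (i : 'I_n) (f : fn) : fn :=
  fun x xi => derive1 (fun t : R => f (x + t *: (ev i - xi 0 i *: xi)) xi) 0.
(* Xi_i: tilde Xi_i = (- x_i xi, e_i - xi_i xi). *)
Definition curve_xi (i : 'I_n) (x xi : vec) (t : R) : vec :=
  let eta := xi + t *: (ev i - xi 0 i *: xi) in (enorm eta)^-1 *: eta.
Definition curve_x (i : 'I_n) (x xi : vec) (t : R) : vec :=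
  let y := x - (t * x 0 i) *: xi in
  let w := curve_xi i x xi t in y - dot y w *: w.
Definition Xiop (i : 'I_n) (f : fn) : fn :=
  fun x xi => derive1 (fun t : R => f (curve_x i x xi t) (curve_xi i x xi t)) 0.

Definition calJ (i j : 'I_n) (f : fn) : fn :=
  fun x xi => Xop i (Xiop j f) x xi - Xop j (Xiop i f) x xi.

Definition Eop (c : R) (i j : 'I_n) (f : fn) : fn :=
  fun x xi => calJ i j f x xi - c * (xi 0 i * Xop j f x xi - xi 0 j * Xop i f x xi).

Definition Jprod (s : seq ('I_n * 'I_n)) (f : fn) : fn :=
  foldr (fun p g => Jop p.1 p.2 g) f s.

(* E_1 ... E_k phi, with E_1 leftmost, c_l = lam - k + l + 1, k = size s *)
Definition Eprod (lam : R) (s : seq ('I_n * 'I_n)) (f : fn) : fn :=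
  foldr (fun pl g => Eop (lam - (size s)%:R + (pl.2)%:R + 1) pl.1.1 pl.1.2 g)
        f (zip s (iota 1 (size s))).

End Defs.

From HB Require Import structures.
From mathcomp Require Import all_boot all_order all_algebra.
From mathcomp Require Import all_classical all_reals all_analysis.
From mathcomp Require Import ring.
Import Order.TTheory GRing.Theory Num.Theory.
Import numFieldNormedType.Exports.
Local Open Scope classical_set_scope.
Local Open Scope ring_scope.

(* Let f be smooth off xi = 0, positively homogeneous of degree mu in xi and
   invariant under x |-> x + tau xi.  On T S^{n-1} the tangent fields act on the
   restriction of f through the ambient partial derivatives: invariance gives
   X_i f = df/dx^i, and along the curve defining Xi_i invariance and homogeneity
   turn f into c(t)^mu f(x + A(t) e_i, xi + B(t) e_i) with A'(0) = 0, B'(0) = 1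
   and c'(0) = -xi_i, so that Xi_i f = df/dxi^i - mu xi_i f.  Differentiating
   once more along X_i and antisymmetrising gives
     J_ij f = calJ_ij f - (mu + 1) (xi_i X_j - xi_j X_i) f   on T S^{n-1}.
   Moreover J_ij f is again smooth and invariant (by the symmetry of second
   x-derivatives) and homogeneous of degree mu - 1.  Applying this to
   J_{i_{l+1} j_{l+1}} ... J_{i_k j_k} psi, of degree lam - (k - l), gives the
   constants c_l = lam - k + l + 1 by induction on k. *)

Section RealCalculus.
Context {R : realType}.

Lemma is_derive_cvgP (F : R -> R) (u l : R) :
  is_derive u 1 F l <-> (fun h => h^-1 * (F (h + u) - F u)) @ 0^' --> l.
Proof.
have quotE : (fun h : R => h^-1 *: ((F \o shift u) (h *: 1) - F u)) =
             (fun h => h^-1 * (F (h + u) - F u)).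
  by apply/funext => h /=; rewrite [_%:A]mulr1.
split=> [[dF <-]|cv]; first by move: dF; rewrite /derivable /derive quotE.
have dF : derivable F u 1 by rewrite /derivable quotE; apply/cvg_ex; exists l.
by apply: DeriveDef => //; rewrite /derive quotE; exact: cvg_lim.
Qed.

Lemma is_derive_shift (g : R -> R) (u d : R) :
  is_derive (0 : R) 1 (fun h => g (h + u)) d -> is_derive u 1 g d.
Proof.
move/is_derive_cvgP => h; apply/is_derive_cvgP.
by move: h; rewrite add0r; under eq_fun do rewrite addr0.
Qed.

Lemma is_derive_cvg {F : R -> R} {u l : R} : is_derive u 1 F l -> F @ u^' --> F u.
Proof.
case=> dF _; apply: cvg_within_filter.
by apply/differentiable_continuous; apply/derivable1_diffP.
Qed.

Lemma is_derive_mull (k x : R) : is_derive x 1 (fun b : R => k * b) k.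
Proof. by have := is_deriveZ k (is_derive_id x (1 : R)); rewrite [k *: 1]mulr1. Qed.

Lemma MVT_from0 {g g' : R -> R} (a : R) :
  (forall u : R, is_derive u 1 g (g' u)) ->
  exists2 th, `|th| <= `|a| & g a - g 0 = a * g' th.
Proof.
move=> dg.
have cg (b c : R) : {within `[b, c], continuous g}.
  by apply: derivable_within_continuous => u _; case: (dg u).
case: (ltgtP a 0) => [a_lt0|a_gt0|->].
- have [th] := MVT_segment (ltW a_lt0) (fun u _ => dg u) (cg _ _).
  rewrite in_itv /= => /andP[th_ge th_le] E; exists th.
    by rewrite !ler0_norm ?(ltW a_lt0) // lerN2.
  by rewrite -opprB E sub0r mulrN opprK mulrC.
- have [th] := MVT_segment (ltW a_gt0) (fun u _ => dg u) (cg _ _).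
  rewrite in_itv /= => /andP[th_ge th_le] E; exists th.
    by rewrite !ger0_norm ?(ltW a_gt0).
  by rewrite E subr0 mulrC.
- by exists 0; rewrite ?normr0 // subrr mul0r.
Qed.

Lemma cvg0_norm_le {T : Type} {F : set_system T} {FF : Filter F} {th : T -> R} (a : T -> R) :
  (\forall h \near F, `|th h| <= `|a h|) -> a @ F --> 0 -> th @ F --> 0.
Proof.
move=> th_le /cvgr0Pnorm_lt a0; apply/cvgr0Pnorm_lt => e e_gt0.
by apply: filterS2 th_le (a0 e e_gt0) => t; apply: le_lt_trans.
Qed.

Lemma cvg0_dnbhs_le (u : R -> R) : (forall h, `|u h| <= `|h|) -> u @ 0^' --> 0.
Proof.
move=> u_le; apply: (cvg0_norm_le (F := (0 : R)^') (fun h => h)); first exact: nearW.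
exact: cvg_within_filter cvg_id.
Qed.

Lemma near0_affine_gt0 (a : R) : \forall t \near (0 : R), 0 < 1 - t * a.
Proof.
have c : (fun t : R => 1 - t * a) @ 0 --> 1 - 0 * a.
  by apply: cvgB; [exact: cvg_cst | apply: cvgM; [exact: cvg_id | exact: cvg_cst]].
by apply: (cvgr_gt _ c); rewrite mul0r subr0 ltr01.
Qed.

Lemma is_derive_affine (a : R) : is_derive (0 : R) 1 (fun t => 1 - t * a) (- a).
Proof. by apply: is_derive_eq; rewrite !(scaler0, add0r, mul1r) [_%:A]mulr1. Qed.

Lemma is_derive_div_affine (a : R) :
  is_derive (0 : R) 1 (fun t => t / (1 - t * a)) 1.
Proof.
have d0 : (fun t : R => 1 - t * a) 0 != 0 by rewrite /= mul0r subr0 oner_eq0.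
have := is_deriveM (is_derive_id (0 : R) (1 : R))
  (is_deriveV (f := fun t : R => 1 - t * a) d0 (is_derive_affine a)).
by rewrite /= mul0r subr0 invr1 !(mul0r, scale0r, add0r, scale1r).
Qed.

Lemma is_derive_sqr_div_affine (a c : R) :
  is_derive (0 : R) 1 (fun t => t * (t / (1 - t * a)) * c) 0.
Proof.
have := is_deriveM (is_deriveM (is_derive_id (0 : R) (1 : R)) (is_derive_div_affine a))
  (is_derive_cst c (0 : R) 1).
by rewrite /= !(mul0r, scaler0, scale0r, add0r, addr0).
Qed.

(* With a = xi_i and V = |e_i - xi_i xi|^2, the point curve_xi t is
   curve_scale a V t *: (xi + t / (1 - t a) e_i). *)
Definition curve_scale (a V t : R) := (1 - t * a) / Num.sqrt (1 + t ^+ 2 * V).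

Lemma curve_scale0 (a V : R) : curve_scale a V 0 = 1.
Proof. by rewrite /curve_scale !(mul0r, expr0n, subr0, addr0) sqrtr1 divr1. Qed.

Lemma is_derive_curve_scale_powR (a V mu : R) :
  is_derive (0 : R) 1 (fun t => curve_scale a V t `^ mu) (- (mu * a)).
Proof.
pose q t := 1 + t ^+ 2 * V.
have q0 : q 0 = 1 by rewrite /q expr0n mul0r addr0.
have dq : is_derive (0 : R) 1 q 0.
  by apply: is_derive_eq; rewrite !(scaler0, scale0r, addr0, mulr0).
have q0_gt0 : 0 < q 0 by rewrite q0.
have dsq := is_derive1_comp (is_derive1_sqrt q0_gt0) dq.
have sq0 : (Num.sqrt \o q) 0 = 1 by rewrite /= q0 sqrtr1.
have sq0_neq0 : (Num.sqrt \o q) 0 != 0 by rewrite sq0 oner_eq0.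
have dc : is_derive (0 : R) 1 (curve_scale a V) (- a).
  have := is_deriveM (is_derive_affine a) (is_deriveV sq0_neq0 dsq).
  by rewrite sq0 !(mulr0, scaler0, add0r, invr1, mul0r, subr0, mul1r, scale1r).
have c_gt0 : 0 < curve_scale a V 0 by rewrite curve_scale0.
have := is_derive1_comp (is_derive1_powR mu c_gt0) dc.
by rewrite curve_scale0 powR1 mulr1 mulrN.
Qed.

End RealCalculus.

Section NormedLimits.
Context {R : realType}.

Lemma near0_addZ_neq0 {V : normedModType R} (q v : V) :
  q != 0 -> \forall b \near (0 : R), q + b *: v != 0.
Proof.
move=> q_neq0.
have c : (fun b : R => q + b *: v) @ 0 --> q + 0 *: v.
  by apply: cvgD; [exact: cvg_cst | apply: cvgZ; [exact: cvg_id | exact: cvg_cst]].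
by rewrite scale0r addr0 in c; exact: cvgr_neq0 q c q_neq0.
Qed.

Context {T : Type} {F : set_system T} {FF : Filter F}.

Lemma cvgZ0 {V : normedModType R} {s : T -> R} (v : V) :
  s @ F --> 0 -> (fun h => s h *: v) @ F --> (0 : V).
Proof.
move=> cs; have c : (fun h => s h *: v) @ F --> (0 : R) *: v.
  by apply: cvgZ => //; exact: cvg_cst.
by rewrite scale0r in c.
Qed.

Lemma cvg_shift {U V : normedModType R} {W : topologicalType} {g : U -> V -> W}
    {p : U} {q : V} {u : T -> U} {w : T -> V} :
  u @ F --> (0 : U) -> w @ F --> (0 : V) ->
  {for (p, q), continuous (fun P : U * V => g P.1 P.2)} ->
  (fun h => g (p + u h) (q + w h)) @ F --> g p q.
Proof.
move=> cu cw cg.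
have cp : (fun h => p + u h) @ F --> p + 0 by apply: cvgD => //; exact: cvg_cst.
have cq : (fun h => q + w h) @ F --> q + 0 by apply: cvgD => //; exact: cvg_cst.
rewrite !addr0 in cp cq.
exact: continuous2_cvg _ cg cp cq.
Qed.

End NormedLimits.

Section TangentBundle.
Context {R : realType} {n : nat}.
Local Notation vec := 'rV[R]_n.

Lemma evE (i j : 'I_n) : ev R i 0 j = (i == j)%:R.
Proof. by rewrite /ev mxE eqxx eq_sym. Qed.

Lemma dotC (u v : vec) : dot u v = dot v u.
Proof. by apply: eq_bigr => k _; rewrite mulrC. Qed.

Lemma dotDl (u v w : vec) : dot (u + v) w = dot u w + dot v w.
Proof. by rewrite /dot -big_split; apply: eq_bigr => k _; rewrite mxE mulrDl. Qed.

Lemma dotZl a (u v : vec) : dot (a *: u) v = a * dot u v.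
Proof. by rewrite /dot mulr_sumr; apply: eq_bigr => k _; rewrite mxE mulrA. Qed.

Lemma dotBl (u v w : vec) : dot (u - v) w = dot u w - dot v w.
Proof. by rewrite dotDl -scaleN1r dotZl mulN1r. Qed.

Lemma dotDr (u v w : vec) : dot w (u + v) = dot w u + dot w v.
Proof. by rewrite dotC dotDl !(dotC w). Qed.

Lemma dotZr a (u v : vec) : dot v (a *: u) = a * dot v u.
Proof. by rewrite dotC dotZl dotC. Qed.

Lemma dot_evl (i : 'I_n) (v : vec) : dot (ev R i) v = v 0 i.
Proof.
rewrite /dot (bigD1 i) //= evE eqxx mul1r big1 ?addr0 // => k /negPf ki.
by rewrite evE eq_sym ki mul0r.
Qed.

Lemma dot0l (v : vec) : dot 0 v = 0.
Proof. by rewrite /dot big1 // => k _; rewrite mxE mul0r. Qed.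

Lemma dot_ge0 (v : vec) : 0 <= dot v v.
Proof. by rewrite /dot sumr_ge0 // => k _; rewrite -expr2 sqr_ge0. Qed.

Lemma dot_normalize (v : vec) : 0 < dot v v ->
  dot ((enorm v)^-1 *: v) ((enorm v)^-1 *: v) = 1.
Proof.
move=> v_gt0; rewrite dotZl dotZr mulrA -expr2 /enorm exprVn sqr_sqrtr ?ltW //.
by rewrite mulVf // gt_eqF.
Qed.

Lemma inTSE {x xi : vec} : inTS x xi -> dot xi xi = 1 /\ dot x xi = 0.
Proof. by case/andP => /eqP -> /eqP ->. Qed.

Lemma inTS_neq0 {x xi : vec} : inTS x xi -> xi != 0.
Proof.
case/inTSE => xi1 _; apply/eqP => xi0; move: xi1.
by rewrite xi0 dot0l => /eqP; rewrite eq_sym oner_eq0.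
Qed.

Definition ev_perp (i : 'I_n) (xi : vec) : vec := ev R i - xi 0 i *: xi.

Lemma dot_ev_perp (i : 'I_n) (xi : vec) : dot xi xi = 1 -> dot (ev_perp i xi) xi = 0.
Proof. by move=> xi1; rewrite dotBl dotZl xi1 dot_evl mulr1 subrr. Qed.

Lemma dot_add_orth (xi v : vec) (t : R) : dot xi xi = 1 -> dot v xi = 0 ->
  dot (xi + t *: v) (xi + t *: v) = 1 + t ^+ 2 * dot v v.
Proof. by move=> xi1 vxi; rewrite !dotDl !dotDr !dotZl !dotZr xi1 vxi dotC vxi; ring. Qed.

Lemma inTS_line (i : 'I_n) (x xi : vec) (t : R) : inTS x xi ->
  inTS (x + t *: ev_perp i xi) xi.
Proof.
case/inTSE => xi1 xxi.
by rewrite /inTS xi1 eqxx /= dotDl dotZl dot_ev_perp // xxi mulr0 addr0.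
Qed.

Lemma inTS_curve (i : 'I_n) (x xi : vec) (t : R) : inTS x xi ->
  inTS (curve_x i x xi t) (curve_xi i x xi t).
Proof.
case/inTSE => xi1 _.
have w1 : dot (curve_xi i x xi t) (curve_xi i x xi t) = 1.
  apply: dot_normalize; rewrite dot_add_orth ?dot_ev_perp //.
  by rewrite ltr_pwDl ?ltr01 // mulr_ge0 ?sqr_ge0 ?dot_ge0.
by rewrite /inTS w1 eqxx /= /curve_x dotBl dotZl w1 mulr1 subrr.
Qed.

End TangentBundle.

Section PartialDerivatives.
Context {R : realType} {n : nat}.
Local Notation vec := 'rV[R]_n.
Local Notation fnR := (fn R n).

Lemma dx_val (f : fnR) (i : 'I_n) (x xi : vec) (d : R) :
  is_derive (0 : R) 1 (fun t : R => f (x + t *: ev R i) xi) d -> dx i f x xi = d.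
Proof. by move=> df; rewrite /dx derive1E; exact: derive_val. Qed.

Lemma dxi_val (f : fnR) (i : 'I_n) (x xi : vec) (d : R) :
  is_derive (0 : R) 1 (fun t : R => f x (xi + t *: ev R i)) d -> dxi i f x xi = d.
Proof. by move=> df; rewrite /dxi derive1E; exact: derive_val. Qed.

Lemma iterd_cat (s1 s2 : seq (bool * 'I_n)) (f : fnR) :
  iterd s1 (iterd s2 f) = iterd (s1 ++ s2) f.
Proof. by elim: s1 => [|[b i] s1 IH] //=; rewrite IH. Qed.

Lemma smooth_iterd (s : seq (bool * 'I_n)) {f : fnR} :
  smooth_off0 f -> smooth_off0 (iterd s f).
Proof. by move=> sf s' x xi xi_neq0; rewrite iterd_cat; exact: sf. Qed.

Section Smooth.
Context {f : fnR}.
Hypothesis sf : smooth_off0 f.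

Lemma is_derive_dx (i : 'I_n) (x xi : vec) : xi != 0 ->
  is_derive (0 : R) 1 (fun t : R => f (x + t *: ev R i) xi) (dx i f x xi).
Proof.
move=> xi_neq0; have [/(_ i) [df _] _] := sf [::] x xi xi_neq0.
by rewrite /dx derive1E; exact: derivableP.
Qed.

Lemma is_derive_dxi (j : 'I_n) (x xi : vec) : xi != 0 ->
  is_derive (0 : R) 1 (fun t : R => f x (xi + t *: ev R j)) (dxi j f x xi).
Proof.
move=> xi_neq0; have [/(_ j) [_ df] _] := sf [::] x xi xi_neq0.
by rewrite /dxi derive1E; exact: derivableP.
Qed.

Lemma is_derive_dx_at (i : 'I_n) (x xi : vec) (u : R) : xi != 0 ->
  is_derive u 1 (fun t : R => f (x + t *: ev R i) xi) (dx i f (x + u *: ev R i) xi).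
Proof.
move=> xi_neq0; apply: is_derive_shift.
have -> : (fun h : R => f (x + (h + u) *: ev R i) xi) =
          (fun h : R => f ((x + u *: ev R i) + h *: ev R i) xi).
  by apply/funext => h; rewrite scalerDl addrA addrAC.
exact: is_derive_dx.
Qed.

Lemma smooth_continuous (x xi : vec) : xi != 0 ->
  {for (x, xi), continuous (fun P : vec * vec => f P.1 P.2)}.
Proof. by move=> xi_neq0; have [_ cf] := sf [::] x xi xi_neq0. Qed.

End Smooth.


Lemma is_derive_x_difference {f : fnR} (p q : vec) (i j : 'I_n) {A B : R -> R} {a : R} :
  smooth_off0 f -> q != 0 -> is_derive (0 : R) 1 A a -> A 0 = 0 -> B @ 0^' --> 0 ->
  is_derive (0 : R) 1
    (fun t => f (p + A t *: ev R i) (q + B t *: ev R j) - f p (q + B t *: ev R j))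
    (a * dx i f p q).
Proof.
move=> sf q_neq0 dA A0 cB.
have cA : A @ 0^' --> 0 by have := is_derive_cvg dA; rewrite A0.
have cqB : (fun h => q + B h *: ev R j) @ 0^' --> q + 0 *: ev R j.
  by apply: cvgD; [exact: cvg_cst | apply: cvgZ; [exact: cB | exact: cvg_cst]].
rewrite scale0r addr0 in cqB.
have qB_neq0 : \forall h \near 0^', q + B h *: ev R j != 0.
  exact: cvgr_neq0 q cqB q_neq0.
(* by the MVT the difference is A h times dx i f at p + th h e_i, with th h -> 0 *)
have mvt h : exists th : R, q + B h *: ev R j != 0 -> `|th| <= `|A h| /\
    f (p + A h *: ev R i) (q + B h *: ev R j) - f p (q + B h *: ev R j) =
    A h * dx i f (p + th *: ev R i) (q + B h *: ev R j).
  have [qB|] := boolP (q + B h *: ev R j != 0); last by exists 0.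
  have [th th_le E] := MVT_from0 (A h) (fun u => is_derive_dx_at sf i p _ u qB).
  by exists th => _; rewrite -E scale0r addr0.
have [th th_spec] := choice mvt.
have th_le : \forall h \near 0^', `|th h| <= `|A h|.
  near=> h; have qB : q + B h *: ev R j != 0 by near: h.
  by case: (th_spec h qB).
have cth : th @ 0^' --> 0 by exact: cvg0_norm_le A th_le cA.
have cdx : (fun h => dx i f (p + th h *: ev R i) (q + B h *: ev R j)) @ 0^' -->
    dx i f p q.
  apply: (cvg_shift (cvgZ0 (ev R i) cth) (cvgZ0 (ev R j) cB)).
  exact: smooth_continuous (smooth_iterd [:: (false, i)] sf) p q q_neq0.
have cQ : (fun h => h^-1 * (A (h + 0) - A 0)) @ 0^' --> a by apply/is_derive_cvgP.
apply/is_derive_cvgP; apply: cvg_trans (cvgM cQ cdx).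
apply: near_eq_cvg; near=> h.
have qB : q + B h *: ev R j != 0 by near: h.
rewrite /= A0 !scale0r !addr0 subrr !subr0; have [_ ->] := th_spec h qB.
by rewrite mulrA.
Unshelve. all: by end_near.
Qed.

Lemma is_derive_partials {f : fnR} (p q : vec) (i j : 'I_n) {A B : R -> R} {a b : R} :
  smooth_off0 f -> q != 0 ->
  is_derive (0 : R) 1 A a -> is_derive (0 : R) 1 B b -> A 0 = 0 -> B 0 = 0 ->
  is_derive (0 : R) 1 (fun t => f (p + A t *: ev R i) (q + B t *: ev R j))
    (a * dx i f p q + b * dxi j f p q).
Proof.
move=> sf q_neq0 dA dB A0 B0.
have cB : B @ 0^' --> 0 by have := is_derive_cvg dB; rewrite B0.
pose H t := f p (q + B t *: ev R j).
have -> : (fun t => f (p + A t *: ev R i) (q + B t *: ev R j)) =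
    (fun t => f (p + A t *: ev R i) (q + B t *: ev R j) - H t) + H.
  by apply/funext => t /=; rewrite subrK.
apply: is_deriveD; first exact: is_derive_x_difference.
rewrite mulrC; have -> : H = (fun s => f p (q + s *: ev R j)) \o B by [].
by apply: is_derive1_comp; rewrite B0; exact: is_derive_dxi.
Qed.

Lemma cvg_near_ev2 {g : fnR} {z xi : vec} {i j : 'I_n} {a b : R -> R} :
  smooth_off0 g -> xi != 0 -> a @ 0^' --> 0 -> b @ 0^' --> 0 ->
  (fun h => g (z + a h *: ev R i + b h *: ev R j) xi) @ 0^' --> g z xi.
Proof.
move=> sg xi_neq0 ca cb.
have cab : (fun h => a h *: ev R i + b h *: ev R j) @ 0^' --> (0 : vec) + 0.
  by apply: cvgD; exact: cvgZ0.
rewrite addr0 in cab.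
have -> : (fun h => g (z + a h *: ev R i + b h *: ev R j) xi) =
    (fun h => g (z + (a h *: ev R i + b h *: ev R j)) (xi + 0)).
  by apply/funext => h; rewrite addr0 addrA.
apply: (cvg_shift cab (cvg_cst (0 : vec))).
exact: smooth_continuous sg z xi xi_neq0.
Qed.

Lemma second_difference_MVT {f : fnR} (i j : 'I_n) (z xi : vec) (h : R) :
  smooth_off0 f -> xi != 0 -> exists ab : R * R,
  [/\ `|ab.1| <= `|h|, `|ab.2| <= `|h| &
   f (z + h *: ev R i + h *: ev R j) xi - f (z + h *: ev R i) xi
     - f (z + h *: ev R j) xi + f z xi =
   h * (h * dx j (dx i f) (z + ab.1 *: ev R i + ab.2 *: ev R j) xi)].
Proof.
move=> sf xi_neq0.
pose u a := f ((z + h *: ev R j) + a *: ev R i) xi - f (z + a *: ev R i) xi.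
pose u' a := dx i f ((z + h *: ev R j) + a *: ev R i) xi - dx i f (z + a *: ev R i) xi.
have du (a : R) : is_derive a 1 u (u' a).
  by apply: is_deriveB; apply: is_derive_dx_at sf _ _ _ _ xi_neq0.
have [al al_le Eu] := MVT_from0 h du.
pose v b := dx i f ((z + al *: ev R i) + b *: ev R j) xi.
have dv (b : R) : is_derive b 1 v (dx j (dx i f) ((z + al *: ev R i) + b *: ev R j) xi).
  exact: is_derive_dx_at (smooth_iterd [:: (false, i)] sf) _ _ _ _ xi_neq0.
have [be be_le Ev] := MVT_from0 h dv.
exists (al, be); split => //=.
have -> : f (z + h *: ev R i + h *: ev R j) xi - f (z + h *: ev R i) xi
    - f (z + h *: ev R j) xi + f z xi = u h - u 0.
  by rewrite /u !scale0r !addr0 (addrAC z (h *: ev R j)) opprB addrA addrAC.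
rewrite Eu; congr (h * _); rewrite -Ev.
by rewrite /u' /v !scale0r !addr0 (addrAC z (h *: ev R j)).
Qed.

Lemma dx_comm {f : fnR} (i j : 'I_n) (z xi : vec) :
  smooth_off0 f -> xi != 0 -> dx i (dx j f) z xi = dx j (dx i f) z xi.
Proof.
move=> sf xi_neq0.
have [ab1 ab1_spec] := choice (fun h => second_difference_MVT i j z xi h sf xi_neq0).
have [ab2 ab2_spec] := choice (fun h => second_difference_MVT j i z xi h sf xi_neq0).
pose L1 h := dx j (dx i f) (z + (ab1 h).1 *: ev R i + (ab1 h).2 *: ev R j) xi.
pose L2 h := dx i (dx j f) (z + (ab2 h).1 *: ev R j + (ab2 h).2 *: ev R i) xi.
have cL1 : L1 @ 0^' --> dx j (dx i f) z xi.
  apply: (cvg_near_ev2 (smooth_iterd [:: (false, j); (false, i)] sf) xi_neq0);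
    by apply: cvg0_dnbhs_le => h; case: (ab1_spec h).
have cL2 : L2 @ 0^' --> dx i (dx j f) z xi.
  apply: (cvg_near_ev2 (smooth_iterd [:: (false, i); (false, j)] sf) xi_neq0);
    by apply: cvg0_dnbhs_le => h; case: (ab2_spec h).
(* the two second differences coincide, and equal h^2 L1 h and h^2 L2 h *)
have L21 : {near 0^', L2 =1 L1}.
  near=> h; have h_neq0 : h != 0 by near: h; exact: nbhs_dnbhs_neq.
  have [_ _ E1] := ab1_spec h; have [_ _ E2] := ab2_spec h.
  have {}E1 : _ = h * (h * L1 h) := E1.
  have {}E2 : _ = h * (h * L2 h) := E2.
  apply: (mulfI h_neq0); apply: (mulfI h_neq0); apply: etrans (esym E2) (etrans _ E1).
  rewrite (addrAC z (h *: ev R j)); congr (_ + _); exact: addrAC.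
apply: (cvg_unique (@Rhausdorff R) _ cL1).
by apply: cvg_trans cL2; exact: near_eq_cvg L21.
Unshelve. all: by end_near.
Qed.

End PartialDerivatives.

Section HomogeneousInvariant.
Context {R : realType} {n : nat}.
Local Notation vec := 'rV[R]_n.
Local Notation fnR := (fn R n).

Definition pos_homogeneous (mu : R) (f : fnR) :=
  forall (x xi : vec) (c : R), xi != 0 -> 0 < c -> f x (c *: xi) = c `^ mu * f x xi.

Definition xi_invariant (f : fnR) :=
  forall (x xi : vec) (tau : R), xi != 0 -> f (x + tau *: xi) xi = f x xi.

Lemma xi_invariant_dx {f : fnR} (i : 'I_n) : xi_invariant f -> xi_invariant (dx i f).
Proof.
move=> fI x xi tau xi_neq0; rewrite /dx; congr (derive1 _ 0).
by apply/funext => t; rewrite addrAC; exact: fI.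
Qed.

Lemma dxi_shift {f : fnR} (j : 'I_n) (z xi : vec) (tau : R) :
  smooth_off0 f -> xi_invariant f -> xi != 0 ->
  dxi j f (z + tau *: xi) xi = dxi j f z xi - tau * dx j f (z + tau *: xi) xi.
Proof.
move=> sf fI xi_neq0.
(* b |-> f z (xi + b e_j) is also b |-> f (z + tau xi + tau b e_j) (xi + b e_j) *)
have d1 := is_derive_partials (z + tau *: xi) xi j j sf xi_neq0
  (is_derive_mull tau 0) (is_derive_id (0 : R) (1 : R)) (mulr0 tau) erefl.
have E : \forall b \near (0 : R),
    f (z + tau *: xi + (tau * b) *: ev R j) (xi + b *: ev R j) = f z (xi + b *: ev R j).
  near=> b; have b_ok : xi + b *: ev R j != 0 by near: b; exact: near0_addZ_neq0.
  by rewrite -scalerA -addrA -scalerDr fI.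
have d2 := is_derive_dxi sf j z xi xi_neq0.
have [_ E1] := near_eq_is_derive E d1; have [_ E2] := d2.
by rewrite -E2 E1 mul1r addrAC subrr add0r.
Unshelve. all: by end_near.
Qed.

Lemma dx_dxi_shift {f : fnR} (i j : 'I_n) (z xi : vec) (tau : R) :
  smooth_off0 f -> xi_invariant f -> xi != 0 ->
  dx i (dxi j f) (z + tau *: xi) xi =
  dx i (dxi j f) z xi - tau * dx i (dx j f) (z + tau *: xi) xi.
Proof.
move=> sf fI xi_neq0; apply: dx_val.
have -> : (fun t : R => dxi j f (z + tau *: xi + t *: ev R i) xi) =
    (fun t => dxi j f (z + t *: ev R i) xi) -
    tau \*: (fun t => dx j f (z + tau *: xi + t *: ev R i) xi).
  apply/funext => t /=; rewrite [z + tau *: xi + _]addrAC dxi_shift //.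
  by rewrite [z + t *: ev R i + _]addrAC.
apply: is_deriveB; last apply: is_deriveZ.
  exact: is_derive_dx (smooth_iterd [:: (true, j)] sf) i z xi xi_neq0.
exact: is_derive_dx (smooth_iterd [:: (false, j)] sf) i (z + tau *: xi) xi xi_neq0.
Qed.

(* The correction terms of the two halves of J_ij agree by symmetry of d^2/dx^i dx^j. *)
Lemma xi_invariant_Jop {f : fnR} (i j : 'I_n) :
  smooth_off0 f -> xi_invariant f -> xi_invariant (Jop i j f).
Proof.
move=> sf fI z xi tau xi_neq0.
by rewrite /Jop !dx_dxi_shift // (dx_comm i j) // opprB addrA subrK.
Qed.

Lemma pos_homogeneous_dx {f : fnR} (mu : R) (i : 'I_n) :
  smooth_off0 f -> pos_homogeneous mu f -> pos_homogeneous mu (dx i f).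
Proof.
move=> sf fH x xi c xi_neq0 c_gt0; apply: dx_val.
have -> : (fun t : R => f (x + t *: ev R i) (c *: xi)) =
    c `^ mu \*: (fun t => f (x + t *: ev R i) xi).
  by apply/funext => t /=; rewrite fH.
exact/is_deriveZ/is_derive_dx.
Qed.

Lemma pos_homogeneous_dxi {f : fnR} (mu : R) (j : 'I_n) :
  smooth_off0 f -> pos_homogeneous mu f -> pos_homogeneous (mu - 1) (dxi j f).
Proof.
move=> sf fH x xi c xi_neq0 c_gt0; apply: dxi_val.
have c_neq0 : c != 0 by rewrite gt_eqF.
have E : \forall b \near (0 : R),
   (c `^ mu \*: ((fun b' => f x (xi + b' *: ev R j)) \o (fun b => c^-1 * b))) b =
   f x (c *: xi + b *: ev R j).
  near=> b.
  have cE : c *: xi + b *: ev R j = c *: (xi + (c^-1 * b) *: ev R j).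
    by rewrite scalerDr scalerA mulVKf.
  have : c *: xi + b *: ev R j != 0.
    by near: b; apply: near0_addZ_neq0; rewrite scaler_eq0 negb_or c_neq0.
  by rewrite cE scaler_eq0 negb_or => /andP[_ b_ok]; rewrite fH.
have d : is_derive (c^-1 * 0) 1 (fun b' => f x (xi + b' *: ev R j)) (dxi j f x xi).
  by rewrite mulr0; exact: is_derive_dxi.
have := near_eq_is_derive E (is_deriveZ (c `^ mu) (is_derive1_comp d (is_derive_mull c^-1 0))).
rewrite powRB ?c_neq0 ?implybT // powRr1 ?ltW //.
by rewrite -mulrA [c^-1 * _]mulrC.
Unshelve. all: by end_near.
Qed.

Lemma pos_homogeneous_Jop {f : fnR} (mu : R) (i j : 'I_n) :
  smooth_off0 f -> pos_homogeneous mu f -> pos_homogeneous (mu - 1) (Jop i j f).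
Proof.
move=> sf fH x xi c xi_neq0 c_gt0.
have dH (a b : 'I_n) := pos_homogeneous_dx (mu - 1) a
  (smooth_iterd [:: (true, b)] sf) (pos_homogeneous_dxi mu b sf fH).
by rewrite /Jop (dH i j) // (dH j i) // mulrBr.
Qed.

End HomogeneousInvariant.

Section Difference.
Context {R : realType} {n : nat}.
Local Notation vec := 'rV[R]_n.
Local Notation fnR := (fn R n).

Section AgreesOff0.
Context {g1 g2 G : fnR}.
Hypotheses (sg1 : smooth_off0 g1) (sg2 : smooth_off0 g2)
  (G_sub : forall x xi : vec, xi != 0 -> G x xi = g1 x xi - g2 x xi).

Lemma is_derive_dx_sub (i : 'I_n) (x xi : vec) : xi != 0 ->
  is_derive (0 : R) 1 (fun t => G (x + t *: ev R i) xi) (dx i g1 x xi - dx i g2 x xi).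
Proof.
move=> xi_neq0.
have -> : (fun t => G (x + t *: ev R i) xi) =
    (fun t => g1 (x + t *: ev R i) xi) - (fun t => g2 (x + t *: ev R i) xi).
  by apply/funext => t /=; rewrite G_sub.
exact: is_deriveB (is_derive_dx sg1 i x xi xi_neq0) (is_derive_dx sg2 i x xi xi_neq0).
Qed.

Lemma is_derive_dxi_sub (j : 'I_n) (x xi : vec) : xi != 0 ->
  is_derive (0 : R) 1 (fun t => G x (xi + t *: ev R j)) (dxi j g1 x xi - dxi j g2 x xi).
Proof.
move=> xi_neq0; apply: near_eq_is_derive
  (is_deriveB (is_derive_dxi sg1 j x xi xi_neq0) (is_derive_dxi sg2 j x xi xi_neq0)).
near=> t; have t_ok : xi + t *: ev R j != 0 by near: t; exact: near0_addZ_neq0.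
by rewrite /= G_sub.
Unshelve. all: by end_near.
Qed.

Lemma continuous_sub (x xi : vec) : xi != 0 ->
  {for (x, xi), continuous (fun P : vec * vec => G P.1 P.2)}.
Proof.
move=> xi_neq0.
have c : (fun P : vec * vec => g1 P.1 P.2 - g2 P.1 P.2) @ (x, xi) --> g1 x xi - g2 x xi.
  by apply: cvgB; exact: smooth_continuous.
have snd_ok : \forall P \near (x, xi), (P : vec * vec).2 != 0.
  have xi_near : \forall v \near xi, v != 0.
    exact: (@cvgr_neq0 _ _ _ (nbhs xi) _ (fun v : vec => v) xi cvg_id xi_neq0).
  exact: (@cvg_snd _ _ (nbhs x) (nbhs xi) _ _ xi_near).
have E : {near (x, xi), (fun P : vec * vec => g1 P.1 P.2 - g2 P.1 P.2) =1
                        (fun P : vec * vec => G P.1 P.2)}.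
  by apply: filterS snd_ok => P P_ok; rewrite /= G_sub.
apply: cvg_trans (near_eq_cvg E) _; rewrite /= G_sub //; exact: c.
Unshelve. all: by end_near.
Qed.

End AgreesOff0.

Lemma iterd_sub {f1 f2 : fnR} (s : seq (bool * 'I_n)) :
  smooth_off0 f1 -> smooth_off0 f2 -> forall x xi : vec, xi != 0 ->
  iterd s (fun x xi => f1 x xi - f2 x xi) x xi = iterd s f1 x xi - iterd s f2 x xi.
Proof.
move=> s1 s2; elim: s => [|[[] i] s IH] x xi xi_neq0 //=.
  apply: dxi_val.
  exact: is_derive_dxi_sub (smooth_iterd s s1) (smooth_iterd s s2) IH i x xi xi_neq0.
apply: dx_val.
exact: is_derive_dx_sub (smooth_iterd s s1) (smooth_iterd s s2) IH i x xi xi_neq0.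
Qed.

Lemma smooth_sub (f1 f2 : fnR) :
  smooth_off0 f1 -> smooth_off0 f2 -> smooth_off0 (fun x xi => f1 x xi - f2 x xi).
Proof.
move=> s1 s2 s x xi xi_neq0.
have sub := iterd_sub s s1 s2; have s1' := smooth_iterd s s1; have s2' := smooth_iterd s s2.
split; last exact: continuous_sub s1' s2' sub x xi xi_neq0.
move=> i; split; apply: ex_derive.
  exact: is_derive_dx_sub s1' s2' sub i x xi xi_neq0.
exact: is_derive_dxi_sub s1' s2' sub i x xi xi_neq0.
Qed.

Lemma smooth_Jop {f : fnR} (i j : 'I_n) : smooth_off0 f -> smooth_off0 (Jop i j f).
Proof.
move=> sf.
exact: smooth_sub (smooth_iterd [:: (false, i); (true, j)] sf)
                  (smooth_iterd [:: (false, j); (true, i)] sf).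
Qed.

End Difference.

Section TangentFields.
Context {R : realType} {n : nat}.
Local Notation vec := 'rV[R]_n.
Local Notation fnR := (fn R n).

Lemma Xop_val (f : fnR) (i : 'I_n) (x xi : vec) (d : R) :
  is_derive (0 : R) 1 (fun t : R => f (x + t *: ev_perp i xi) xi) d -> Xop i f x xi = d.
Proof. by move=> df; rewrite /Xop derive1E; exact: derive_val. Qed.

Lemma Xiop_val (f : fnR) (i : 'I_n) (x xi : vec) (d : R) :
  is_derive (0 : R) 1 (fun t : R => f (curve_x i x xi t) (curve_xi i x xi t)) d ->
  Xiop i f x xi = d.
Proof. by move=> df; rewrite /Xiop derive1E; exact: derive_val. Qed.

Lemma Xop_eq_on_TS {g f : fnR} (i : 'I_n) {x xi : vec} :
  (forall x' xi', inTS x' xi' -> g x' xi' = f x' xi') -> inTS x xi ->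
  Xop i g x xi = Xop i f x xi.
Proof.
move=> gf xiTS; rewrite /Xop; congr (derive1 _ 0); apply/funext => t.
exact/gf/inTS_line.
Qed.

Lemma Xiop_eq_on_TS {g f : fnR} (i : 'I_n) {x xi : vec} :
  (forall x' xi', inTS x' xi' -> g x' xi' = f x' xi') -> inTS x xi ->
  Xiop i g x xi = Xiop i f x xi.
Proof.
move=> gf xiTS; rewrite /Xiop; congr (derive1 _ 0); apply/funext => t.
exact/gf/inTS_curve.
Qed.

Lemma Xop_invariant {f : fnR} (i : 'I_n) {x xi : vec} :
  xi_invariant f -> inTS x xi -> Xop i f x xi = dx i f x xi.
Proof.
move=> fI xiTS; rewrite /Xop /dx; congr (derive1 _ 0); apply/funext => t.
have -> : x + t *: (ev R i - xi 0 i *: xi) = (x + t *: ev R i) + (- (t * xi 0 i)) *: xi.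
  by apply/rowP => k; rewrite !mxE; ring.
exact/fI/inTS_neq0/xiTS.
Qed.

Lemma curve_eval {f : fnR} (mu : R) (i : 'I_n) (x xi : vec) (t : R) :
  pos_homogeneous mu f -> xi_invariant f -> inTS x xi -> 0 < 1 - t * xi 0 i ->
  f (curve_x i x xi t) (curve_xi i x xi t) =
  curve_scale (xi 0 i) (dot (ev_perp i xi) (ev_perp i xi)) t `^ mu *
  f (x + (t * (t / (1 - t * xi 0 i)) * x 0 i) *: ev R i)
    (xi + (t / (1 - t * xi 0 i)) *: ev R i).
Proof.
move=> fH fI xiTS d_gt0; have [xi1 _] := inTSE xiTS.
have eta1 := dot_add_orth xi (ev_perp i xi) t xi1 (dot_ev_perp i xi xi1).
set d := 1 - t * xi 0 i; set B := t / d; set z := xi + B *: ev R i.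
set eta := xi + t *: ev_perp i xi.
have eta_ge1 : 1 <= dot eta eta by rewrite eta1 lerDl mulr_ge0 ?sqr_ge0 ?dot_ge0.
have eta_dz : eta = d *: z.
  apply/rowP => k; rewrite /eta /z /B /d /ev_perp !mxE; field; by rewrite gt_eqF.
have c_gt0 : 0 < curve_scale (xi 0 i) (dot (ev_perp i xi) (ev_perp i xi)) t.
  by rewrite /curve_scale -/d divr_gt0 // sqrtr_gt0 -eta1 (lt_le_trans ltr01).
have w_cz : curve_xi i x xi t =
    curve_scale (xi 0 i) (dot (ev_perp i xi) (ev_perp i xi)) t *: z.
  have -> : curve_xi i x xi t = (enorm eta)^-1 *: eta by [].
  by rewrite /enorm eta1 eta_dz scalerA mulrC.
have z_neq0 : z != 0.
  by apply: contraTneq eta_ge1 => z0; rewrite eta_dz z0 scaler0 dot0l ler10.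
have w_neq0 : curve_xi i x xi t != 0 by rewrite w_cz scaler_eq0 negb_or z_neq0 gt_eqF.
(* curve_x t = y - <y, w> w with w = c z, and y = x + t B x_i e_i - t x_i z:
   invariance removes both shifts and homogeneity extracts c^mu *)
set y := x - (t * x 0 i) *: xi.
have -> : curve_x i x xi t = y + (- dot y (curve_xi i x xi t)) *: curve_xi i x xi t.
  by rewrite scaleNr.
rewrite fI // w_cz fH //; congr (_ * _).
have -> : y = (x + (t * B * x 0 i) *: ev R i) + (- (t * x 0 i)) *: z.
  by apply/rowP => k; rewrite /y /z !mxE; ring.
by rewrite fI.
Qed.

Lemma Xiop_homogeneous {f : fnR} (mu : R) (i : 'I_n) (x xi : vec) :
  smooth_off0 f -> pos_homogeneous mu f -> xi_invariant f -> inTS x xi ->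
  Xiop i f x xi = dxi i f x xi - mu * xi 0 i * f x xi.
Proof.
move=> sf fH fI xiTS; apply: Xiop_val.
set a := xi 0 i; set V := dot (ev_perp i xi) (ev_perp i xi).
have A0 : (fun t : R => t * (t / (1 - t * a)) * x 0 i) 0 = 0 by rewrite /= !mul0r.
have B0 : (fun t : R => t / (1 - t * a)) 0 = 0 by rewrite /= mul0r.
have dF := is_deriveM (is_derive_curve_scale_powR a V mu)
  (is_derive_partials x xi i i sf (inTS_neq0 xiTS)
     (is_derive_sqr_div_affine a (x 0 i)) (is_derive_div_affine a) A0 B0).
apply: is_derive_eq (near_eq_is_derive _ dF) _.
  near=> t; have t_ok : 0 < 1 - t * a by near: t; exact: near0_affine_gt0.
  by rewrite /= (curve_eval mu i x xi t fH fI xiTS t_ok).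
rewrite /= curve_scale0 powR1 !(mul0r, scale0r, addr0, mul1r, scale1r) add0r.
by rewrite -[_ *: _]/(f x xi * _); ring.
Unshelve. all: by end_near.
Qed.

Lemma Xop_Xiop {f : fnR} (mu : R) (i j : 'I_n) (x xi : vec) :
  smooth_off0 f -> pos_homogeneous mu f -> xi_invariant f -> inTS x xi ->
  Xop i (Xiop j f) x xi =
  dx i (dxi j f) x xi + xi 0 i * dx j f x xi - mu * xi 0 j * dx i f x xi.
Proof.
move=> sf fH fI xiTS; have xi_neq0 := inTS_neq0 xiTS; apply: Xop_val.
have -> : (fun t : R => Xiop j f (x + t *: ev_perp i xi) xi) =
    (fun t : R => dxi j f (x + t *: ev R i) xi
      + (t * xi 0 i) * dx j f (x + t *: ev R i) xi
      - mu * xi 0 j * f (x + t *: ev R i) xi).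
  apply/funext => t; rewrite (Xiop_homogeneous mu j _ _ sf fH fI (inTS_line i x xi t xiTS)).
  have -> : x + t *: ev_perp i xi = (x + t *: ev R i) + (- (t * xi 0 i)) *: xi.
    by apply/rowP => k; rewrite /ev_perp !mxE; ring.
  by rewrite dxi_shift // (xi_invariant_dx j fI) // fI // mulNr opprK.
have d1 := is_derive_dx (smooth_iterd [:: (true, j)] sf) i x xi xi_neq0.
have d2 := is_derive_dx (smooth_iterd [:: (false, j)] sf) i x xi xi_neq0.
have d3 := is_derive_dx sf i x xi xi_neq0.
(* instance search assembles the derivative from d1, d2 and d3 *)
apply: is_derive_eq; rewrite !(mul0r, scale0r, scaler0, add0r, addr0) [_%:A]mulr1.
by rewrite -[_ *: _]/(_ * _) -[_ *: _]/(_ * _); ring.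
Qed.

Lemma Eop_Jop {f g : fnR} (mu : R) (i j : 'I_n) (x xi : vec) :
  smooth_off0 f -> pos_homogeneous mu f -> xi_invariant f ->
  (forall x' xi', inTS x' xi' -> g x' xi' = f x' xi') -> inTS x xi ->
  Eop (mu + 1) i j g x xi = Jop i j f x xi.
Proof.
move=> sf fH fI gf xiTS.
have Xig k x' xi' : inTS x' xi' -> Xiop k g x' xi' = Xiop k f x' xi'.
  exact: Xiop_eq_on_TS.
rewrite /Eop /calJ (Xop_eq_on_TS i (Xig j) xiTS) (Xop_eq_on_TS j (Xig i) xiTS).
rewrite (Xop_eq_on_TS i gf xiTS) (Xop_eq_on_TS j gf xiTS).
rewrite (Xop_Xiop mu i j x xi sf fH fI xiTS) (Xop_Xiop mu j i x xi sf fH fI xiTS).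
rewrite (Xop_invariant i fI xiTS) (Xop_invariant j fI xiTS) /Jop.
(* generalize the derivatives first: ring would otherwise compare them up to conversion *)
move: (dx i (dxi j f) x xi) (dx j (dxi i f) x xi) (dx i f x xi) (dx j f x xi).
by move=> ? ? ? ?; ring.
Qed.

End TangentFields.

Section JohnOperators.
Context {R : realType} {n : nat}.
Local Notation fnR := (fn R n).

Lemma Jprod_regular {psi : fnR} {lam : R} (s : seq ('I_n * 'I_n)) :
  smooth_off0 psi -> pos_homogeneous lam psi -> xi_invariant psi ->
  [/\ smooth_off0 (Jprod s psi), pos_homogeneous (lam - (size s)%:R) (Jprod s psi)
    & xi_invariant (Jprod s psi)].
Proof.
move=> sp pH pI; elim: s => [|[i j] s [sJ hJ iJ]] /=; first by rewrite subr0.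
split; [exact: smooth_Jop | | exact: xi_invariant_Jop].
by rewrite -natr1 opprD addrA; exact: pos_homogeneous_Jop.
Qed.

Lemma Jprod_Eop_foldr {psi : fnR} {lam : R} :
  smooth_off0 psi -> pos_homogeneous lam psi -> xi_invariant psi ->
  forall (s : seq ('I_n * 'I_n)) (m : nat) (c : nat -> R),
  (* the l-th operator (from 0) acts on a function of degree lam - (size s - l - 1) *)
  (forall l, (l < size s)%N -> c (m + l)%N = lam - (size s)%:R + l%:R + 2) ->
  forall x xi, inTS x xi ->
  Jprod s psi x xi =
  foldr (fun pl g => Eop (c pl.2) pl.1.1 pl.1.2 g) (restrTS psi)
    (zip s (iota m (size s))) x xi.
Proof.
move=> sp pH pI; elim=> [|[i j] s IH] m c c_spec x xi xiTS /=.
  by rewrite /restrTS xiTS.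
have [sJ hJ iJ] := Jprod_regular s sp pH pI.
have -> : c m = (lam - (size s)%:R) + 1.
  by have := c_spec 0%N (ltn0Sn _); rewrite addn0 => ->; rewrite /= -natr1; ring.
symmetry; apply: (Eop_Jop _ i j x xi sJ hJ iJ _ xiTS) => x' xi' xiTS'.
symmetry; apply: IH => // l l_lt; rewrite addSnnS c_spec //= -!natr1; ring.
Qed.

End JohnOperators.

Theorem lemma3p2 (R : realType) (n : nat) (lam : R) (psi : 'rV[R]_n -> 'rV[R]_n -> R)
  (Hsmooth : smooth_off0 psi)
  (Hhom : forall (x xi : 'rV[R]_n) (c : R), xi != 0 -> 0 < c ->
            psi x (c *: xi) = c `^ lam * psi x xi)
  (Hinv : forall (x xi : 'rV[R]_n) (tau : R), xi != 0 ->
            psi (x + tau *: xi) xi = psi x xi)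
  (k : nat) (Hk : (1 <= k)%N) (s : seq ('I_n * 'I_n)) (Hs : size s = k) :
  forall x xi : 'rV[R]_n, inTS x xi ->
    Jprod s psi x xi = Eprod lam s (restrTS psi) x xi.
Proof.
move=> x xi xiTS; rewrite /Eprod.
apply: (Jprod_Eop_foldr Hsmooth Hhom Hinv s 1 (fun l => lam - (size s)%:R + l%:R + 1)) => //.
by move=> l _; rewrite add1n -natr1; ring.
Qed.
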